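(* There exist domains $D_1$ and $D_2$ in $\mathbb{R}^2$ with $D_1\subset D_2$, such that $\mathbb{R}^2\setminus D_2$ contains at least two points, and a point $z\in D_1$ such that $$\lambda_{D_2}(z)=\lambda''_{D_2}(z)=\lambda'_{D_2}(z)>\lambda'_{D_1}(z)>\lambda''_{D_1}(z).$$ In particular $\lambda'_{D_2}(z)>\lambda'_{D_1}(z)$ and $\lambda''_{D_2}(z)>\lambda''_{D_1}(z)$.
   Context: Write $d(z,\partial D)=\inf\{|z-a|:a\in\partial D\}$ and $Q(z;a,b)=|z-a|\big(1+\big|\log\frac{|a-b|}{|z-a|}\big|\big)$ (equal to $+\infty$ when $a=b$). For a domain $D\subset\mathbb{R}^2$ whose complement contains at least two points and $z\in D$ define $1/\lambda_D(z)=\inf\{Q(z;a,b): a,b\in\mathbb{R}^2\setminus D\}$, $1/\lambda'_D(z)=\inf\{Q(z;a,b): a,b\in\partial D\}$, $1/\lambda''_D(z)=\inf\{Q(z;a,b): a,b\in\partial D,\ |z-a|=d(z,\partial D)\}$. *)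

From Stdlib Require Import Reals ClassicalEpsilon.
From Coquelicot Require Import Coquelicot.
Open Scope R_scope.

Definition pt := (R * R)%type.

Definition dist2 (z a : pt) : R :=
  sqrt ((fst z - fst a) ^ 2 + (snd z - snd a) ^ 2).

Definition open2 (D : pt -> Prop) : Prop :=
  forall z, D z -> exists eps, 0 < eps /\ forall w, dist2 z w < eps -> D w.

Definition connected2 (D : pt -> Prop) : Prop :=
  forall U V : pt -> Prop, open2 U -> open2 V ->
    (forall z, D z -> U z \/ V z) ->
    (forall z, D z -> U z -> V z -> False) ->
    (exists z, D z /\ U z) -> (exists z, D z /\ V z) -> False.

Definition domain2 (D : pt -> Prop) : Prop :=
  (exists z, D z) /\ open2 D /\ connected2 D.

Definition boundary2 (D : pt -> Prop) (a : pt) : Prop :=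
  forall eps, 0 < eps ->
    (exists w, dist2 a w < eps /\ D w) /\ (exists w, dist2 a w < eps /\ ~ D w).

Definition dist_bd (D : pt -> Prop) (z : pt) : Rbar :=
  Rbar_glb (fun q => exists a, boundary2 D a /\ q = Finite (dist2 z a)).

Definition Qf (z a b : pt) : Rbar :=
  if excluded_middle_informative (a = b) then p_infty
  else Finite (dist2 z a * (1 + Rabs (ln (dist2 a b / dist2 z a)))).

Definition lam (D : pt -> Prop) (z : pt) : Rbar :=
  Rbar_inv (Rbar_glb (fun q => exists a b, ~ D a /\ ~ D b /\ q = Qf z a b)).

Definition lam' (D : pt -> Prop) (z : pt) : Rbar :=
  Rbar_inv (Rbar_glb (fun q => exists a b, boundary2 D a /\ boundary2 D b /\ q = Qf z a b)).

Definition lam'' (D : pt -> Prop) (z : pt) : Rbar :=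
  Rbar_inv (Rbar_glb (fun q => exists a b, boundary2 D a /\ boundary2 D b /\
     Finite (dist2 z a) = dist_bd D z /\ q = Qf z a b)).

From Stdlib Require Import Reals Lra Psatz Classical ClassicalEpsilon Relations.
From Coquelicot Require Import Coquelicot.
Open Scope R_scope.

(** Take z = 0, D2 = R^2 \ {1, 2} and D1 = D2 minus the closed disc of radius 1/5
    about 1.  For D2 every admissible a lies in {1, 2}, so Q(0;a,b) >= |a| >= 1,
    with equality for (a, b) = (1, 2); hence all three densities equal 1.
    The boundary of D1 is the circle |a - 1| = 1/5 together with the point 2.
    The inequalities |ln x| >= 1 - x and |ln x| >= 1 - 1/x give
    Q(z;a,b) >= 2|z-a| - |a-b| and Q(z;a,b) >= |z-a| (2 - |z-a|/|a-b|), from which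
    Q(0;a,b) >= 1.01 on all boundary pairs of D1, and Q(0;4/5,b) >= 16/15 for the
    nearest boundary point a = (4/5, 0).  The pair a = (1, 1/5), b = 2 has
    |a - b| = |a|, so Q(0;a,b) = |a| = sqrt 26 / 5 < 16/15, which separates
    lambda'_{D1}(0) from lambda''_{D1}(0). *)

Lemma dist2_ge0 a b : 0 <= dist2 a b.
Proof. apply sqrt_pos. Qed.

Lemma dist2_sqr a b :
  dist2 a b * dist2 a b = (fst a - fst b) ^ 2 + (snd a - snd b) ^ 2.
Proof. apply sqrt_sqrt, Rplus_le_le_0_compat; apply pow2_ge_0. Qed.

Lemma dist2_sym a b : dist2 a b = dist2 b a.
Proof. unfold dist2. f_equal. ring. Qed.

Lemma dist2_eq a b d :
  0 <= d -> d * d = (fst a - fst b) ^ 2 + (snd a - snd b) ^ 2 -> dist2 a b = d.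
Proof. intros Hd Hsq. apply sqrt_lem_1; nra. Qed.

Lemma dist2_refl a : dist2 a a = 0.
Proof. apply dist2_eq; [lra | ring]. Qed.

Lemma dist2_lt a b r :
  0 <= r -> (fst a - fst b) ^ 2 + (snd a - snd b) ^ 2 < r * r -> dist2 a b < r.
Proof.
  intros Hr Hsq. apply Rsqr_incrst_0; [| apply dist2_ge0 | exact Hr].
  unfold Rsqr. rewrite dist2_sqr. exact Hsq.
Qed.

Lemma dist2_gt a b r :
  0 <= r -> r * r < (fst a - fst b) ^ 2 + (snd a - snd b) ^ 2 -> r < dist2 a b.
Proof.
  intros Hr Hsq. apply Rsqr_incrst_0; [| exact Hr | apply dist2_ge0].
  unfold Rsqr. rewrite dist2_sqr. exact Hsq.
Qed.

Lemma dist2_gt0 a b : a <> b -> 0 < dist2 a b.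
Proof.
  intro Hab. destruct (Req_dec (dist2 a b) 0) as [H0|H0]; [|pose proof (dist2_ge0 a b); lra].
  exfalso. apply Hab. pose proof (dist2_sqr a b) as Hsq. rewrite H0 in Hsq.
  destruct a as [a1 a2], b as [b1 b2]. cbn [fst snd] in Hsq.
  pose proof (pow2_ge_0 (a1 - b1)). pose proof (pow2_ge_0 (a2 - b2)).
  assert (a1 - b1 = 0) by nra. assert (a2 - b2 = 0) by nra.
  f_equal; lra.
Qed.

Lemma dist2_triangle a b c : dist2 a c <= dist2 a b + dist2 b c.
Proof.
  pose proof (dist2_sqr a b) as HX. pose proof (dist2_sqr b c) as HY.
  pose proof (dist2_sqr a c) as HZ.
  pose proof (dist2_ge0 a b). pose proof (dist2_ge0 b c). pose proof (dist2_ge0 a c).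
  set (X := dist2 a b) in *. set (Y := dist2 b c) in *. set (Z := dist2 a c) in *.
  clearbody X Y Z.
  destruct a as [a1 a2], b as [b1 b2], c as [c1 c2]. simpl in *.
  assert (cauchy_schwarz : (a1 - b1) * (b1 - c1) + (a2 - b2) * (b2 - c2) <= X * Y).
  { apply Rsqr_incr_0_var; [unfold Rsqr | nra].
    replace (X * Y * (X * Y)) with (X * X * (Y * Y)) by ring. rewrite HX, HY.
    pose proof (pow2_ge_0 ((a1 - b1) * (b2 - c2) - (a2 - b2) * (b1 - c1))). nra. }
  apply Rsqr_incr_0_var; unfold Rsqr; nra.
Qed.

Lemma ln_le_sub1 x : 0 < x -> ln x <= x - 1.
Proof. intro Hx. pose proof (exp_ineq1_le (ln x)) as H. rewrite exp_ln in H; lra. Qed.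

Lemma Rabs_ln_ge_1_sub x : 0 < x -> 1 - x <= Rabs (ln x).
Proof.
  intro Hx. pose proof (ln_le_sub1 x Hx). rewrite <- Rabs_Ropp.
  pose proof (Rle_abs (- ln x)). lra.
Qed.

Lemma Rabs_ln_ge_1_sub_inv x : 0 < x -> 1 - / x <= Rabs (ln x).
Proof.
  intro Hx. pose proof (ln_le_sub1 (/ x) (Rinv_0_lt_compat x Hx)).
  rewrite ln_Rinv in * by exact Hx. pose proof (Rle_abs (ln x)). lra.
Qed.

Lemma Qf_neq z a b :
  a <> b -> Qf z a b = Finite (dist2 z a * (1 + Rabs (ln (dist2 a b / dist2 z a)))).
Proof. intro Hab. unfold Qf. destruct (excluded_middle_informative (a = b)); easy. Qed.

Lemma Qf_balanced z a b : a <> b -> dist2 a b = dist2 z a -> Qf z a b = dist2 z a.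
Proof.
  intros Hab Hs. rewrite Qf_neq, Hs by exact Hab.
  destruct (Req_dec (dist2 z a) 0) as [H0|H0].
  - rewrite H0. f_equal. ring.
  - rewrite Rdiv_diag, ln_1, Rabs_R0 by exact H0. f_equal. ring.
Qed.

Lemma Qf_ge_dist z a b : Rbar_le (dist2 z a) (Qf z a b).
Proof.
  destruct (classic (a = b)) as [Hab|Hab].
  - unfold Qf. destruct (excluded_middle_informative (a = b)); [exact I | contradiction].
  - rewrite Qf_neq by exact Hab. simpl.
    pose proof (Rabs_pos (ln (dist2 a b / dist2 z a))). pose proof (dist2_ge0 z a). nra.
Qed.

Lemma Qf_ge_sub z a b : 0 < dist2 z a -> Rbar_le (2 * dist2 z a - dist2 a b) (Qf z a b).
Proof.
  intro Hr. destruct (classic (a = b)) as [Hab|Hab].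
  - unfold Qf. destruct (excluded_middle_informative (a = b)); [exact I | contradiction].
  - rewrite Qf_neq by exact Hab. simpl.
    pose proof (dist2_gt0 a b Hab) as Hs.
    pose proof (Rabs_ln_ge_1_sub (dist2 a b / dist2 z a) ltac:(apply Rdiv_lt_0_compat; lra)).
    assert (Hq : dist2 z a * (dist2 a b / dist2 z a) = dist2 a b) by (field; lra).
    nra.
Qed.

Lemma Qf_ge_ratio z a b :
  0 < dist2 z a -> Rbar_le (dist2 z a * (2 - dist2 z a / dist2 a b)) (Qf z a b).
Proof.
  intro Hr. destruct (classic (a = b)) as [Hab|Hab].
  - unfold Qf. destruct (excluded_middle_informative (a = b)); [exact I | contradiction].
  - rewrite Qf_neq by exact Hab. simpl.
    pose proof (dist2_gt0 a b Hab) as Hs.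
    pose proof (Rabs_ln_ge_1_sub_inv (dist2 a b / dist2 z a)
      ltac:(apply Rdiv_lt_0_compat; lra)) as Hln.
    replace (/ (dist2 a b / dist2 z a)) with (dist2 z a / dist2 a b) in Hln
      by (field; lra).
    nra.
Qed.

Lemma Rbar_glb_correct E : Rbar_is_glb E (Rbar_glb E).
Proof. unfold Rbar_glb. destruct (Rbar_ex_glb E). assumption. Qed.

Lemma Rbar_glb_ge E (L : Rbar) : (forall x, E x -> Rbar_le L x) -> Rbar_le L (Rbar_glb E).
Proof. intro HL. apply (proj2 (Rbar_glb_correct E)). exact HL. Qed.

Lemma Rbar_glb_le_elt E x : E x -> Rbar_le (Rbar_glb E) x.
Proof. intro Hx. exact (proj1 (Rbar_glb_correct E) x Hx). Qed.

Lemma Rbar_glb_attained E (L : R) :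
  (forall x, E x -> Rbar_le L x) -> E (Finite L) -> Rbar_glb E = L.
Proof.
  intros HL HE. apply Rbar_is_glb_unique. split; [exact HL|].
  intros b Hb. exact (Hb _ HE).
Qed.

Lemma Rbar_glb_finite E (L U : R) :
  (forall x, E x -> Rbar_le L x) -> E (Finite U) ->
  exists g, Rbar_glb E = Finite g /\ L <= g <= U.
Proof.
  intros HL HU. pose proof (Rbar_glb_ge E L HL) as Hge.
  pose proof (Rbar_glb_le_elt E U HU) as Hle.
  destruct (Rbar_glb E) as [g| |]; simpl in *; try contradiction.
  exists g. auto.
Qed.

Lemma Rbar_inv_lt_inv (x : Rbar) (y : R) :
  0 < y -> Rbar_lt y x -> Rbar_lt (Rbar_inv x) (/ y).
Proof.
  intros Hy. destruct x as [x| |]; simpl; intro Hlt; try contradiction.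
  - apply Rinv_lt_contravar; nra.
  - apply Rinv_0_lt_compat. exact Hy.
Qed.

Lemma boundary2_not_in D a : open2 D -> boundary2 D a -> ~ D a.
Proof.
  intros HD Hb Ha. destruct (HD a Ha) as [e [He Hball]].
  destruct (Hb e He) as [_ [w [Hw Hnw]]]. exact (Hnw (Hball w Hw)).
Qed.

Lemma boundary2_of_vertical D a :
  ~ D a -> (forall h, 0 < h -> D (fst a, snd a + h)) -> boundary2 D a.
Proof.
  intros Hna Habove e He. split.
  - exists (fst a, snd a + e / 2). split; [|apply Habove; lra].
    apply dist2_lt; simpl; nra.
  - exists a. rewrite dist2_refl. auto.
Qed.

Lemma open2_and A B : open2 A -> open2 B -> open2 (fun w => A w /\ B w).
Proof.
  intros HA HB z [Az Bz].
  destruct (HA z Az) as [e1 [He1 H1]], (HB z Bz) as [e2 [He2 H2]].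
  exists (Rmin e1 e2). split; [apply Rmin_glb_lt; assumption|].
  intros w Hw. pose proof (Rmin_l e1 e2). pose proof (Rmin_r e1 e2).
  split; [apply H1 | apply H2]; lra.
Qed.

Lemma open2_neq p : open2 (fun w => w <> p).
Proof.
  intros z Hz. exists (dist2 z p). split; [apply dist2_gt0; exact Hz|].
  intros w Hw ->. lra.
Qed.

Lemma open2_exterior c r : open2 (fun w => r < dist2 w c).
Proof.
  intros z Hz. exists (dist2 z c - r). split; [lra|].
  intros w Hw. pose proof (dist2_triangle z w c). lra.
Qed.

Definition seg (x y : pt) (t : R) : pt :=
  (fst x + t * (fst y - fst x), snd x + t * (snd y - snd x)).

Lemma seg_0 x y : seg x y 0 = x.
Proof. destruct x. unfold seg. simpl. f_equal; ring. Qed.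

Lemma seg_1 x y : seg x y 1 = y.
Proof. destruct x, y. unfold seg. simpl. f_equal; ring. Qed.

Lemma dist2_seg x y t s : dist2 (seg x y t) (seg x y s) = Rabs (t - s) * dist2 x y.
Proof.
  apply dist2_eq; [pose proof (Rabs_pos (t - s)); pose proof (dist2_ge0 x y); nra|].
  replace (Rabs (t - s) * dist2 x y * (Rabs (t - s) * dist2 x y))
    with (Rabs (t - s) * Rabs (t - s) * (dist2 x y * dist2 x y)) by ring.
  rewrite <- Rabs_mult, Rabs_right, dist2_sqr by apply Rle_ge, Rle_0_sqr. unfold seg. cbn [fst snd]. ring.
Qed.

Definition open1 (A : R -> Prop) : Prop :=
  forall t, A t -> exists eps, 0 < eps /\ forall s, Rabs (t - s) < eps -> A s.

Lemma open2_seg_preimage U x y : open2 U -> open1 (fun t => U (seg x y t)).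
Proof.
  intros HU t Ht. destruct (HU _ Ht) as [e [He Hball]].
  pose proof (dist2_ge0 x y) as Hd.
  exists (e / (dist2 x y + 1)). split; [apply Rdiv_lt_0_compat; lra|].
  intros s Hs. apply Hball. rewrite dist2_seg.
  assert (e / (dist2 x y + 1) * (dist2 x y + 1) = e) by (field; lra).
  pose proof (Rabs_pos (t - s)). nra.
Qed.

Lemma unit_interval_connected (A B : R -> Prop) :
  open1 A -> open1 B ->
  (forall t, 0 <= t <= 1 -> A t \/ B t) ->
  (forall t, 0 <= t <= 1 -> A t -> B t -> False) ->
  A 0 -> A 1.
Proof.
  intros HA HB cover disj A0.
  set (E := fun t => 0 <= t <= 1 /\ forall s, 0 <= s <= t -> A s).
  assert (E0 : E 0) by (split; [lra | intros s Hs; replace s with 0 by lra; exact A0]).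
  destruct (completeness E) as [T [ubT lubT]].
  { exists 1. intros t [Ht _]. lra. }
  { exists 0. exact E0. }
  assert (HT : 0 <= T <= 1) by (split; [apply ubT, E0 | apply lubT; intros t [Ht _]; lra]).
  assert (below : forall s, 0 <= s < T -> A s).
  { intros s Hs. apply NNPP. intro nAs.
    enough (T <= s) by lra.
    apply lubT. intros t [Ht At]. apply Rnot_lt_le. intro Hst. apply nAs, At. lra. }
  destruct (cover T HT) as [AT|BT].
  - destruct (Rle_lt_dec 1 T) as [T1|T1]; [replace 1 with T by lra; exact AT|].
    destruct (HA T AT) as [del [Hdel near]].
    assert (ET' : E (Rmin 1 (T + del / 2))).
    { pose proof (Rmin_l 1 (T + del / 2)). pose proof (Rmin_r 1 (T + del / 2)).
      split; [split; [apply Rmin_glb|]; lra|].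
      intros s Hs. destruct (Rlt_le_dec s T); [apply below; lra|].
      apply near. rewrite Rabs_left1; lra. }
    pose proof (ubT _ ET'). unfold Rmin in *.
    destruct (Rle_dec 1 (T + del / 2)); lra.
  - exfalso. destruct (HB T BT) as [del [Hdel near]].
    destruct (Req_dec T 0) as [T0|T0]; [subst T; exact (disj 0 HT A0 BT)|].
    pose proof (Rmax_l 0 (T - del / 2)). pose proof (Rmax_r 0 (T - del / 2)).
    set (s := Rmax 0 (T - del / 2)) in *.
    assert (s < T) by (apply Rmax_lub_lt; lra).
    apply (disj s); [lra | apply below; lra | apply near; rewrite Rabs_right; lra].
Qed.

Definition segment_in (D : pt -> Prop) (x y : pt) : Prop :=
  forall t, 0 <= t <= 1 -> D (seg x y t).

Section OpenPartition.

Variables (D U V : pt -> Prop).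
Hypotheses (HU : open2 U) (HV : open2 V).
Hypothesis cover : forall w, D w -> U w \/ V w.
Hypothesis disj : forall w, D w -> U w -> V w -> False.

Lemma segment_in_open_partition x y : segment_in D x y -> U x -> U y.
Proof.
  intros Hseg Ux. rewrite <- (seg_1 x y).
  apply (unit_interval_connected (fun t => U (seg x y t)) (fun t => V (seg x y t))).
  - apply open2_seg_preimage. exact HU.
  - apply open2_seg_preimage. exact HV.
  - intros t Ht. apply cover, Hseg, Ht.
  - intros t Ht. apply disj, Hseg, Ht.
  - rewrite seg_0. exact Ux.
Qed.

Lemma polygonal_open_partition x y :
  clos_refl_trans pt (segment_in D) x y -> U x -> U y.
Proof.
  intro Hxy. induction Hxy; auto. apply segment_in_open_partition. assumption.
Qed.

End OpenPartition.

Lemma connected2_of_polygonal D c :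
  D c -> (forall x, D x -> clos_refl_trans pt (segment_in D) x c) -> connected2 D.
Proof.
  intros Dc paths U V HU HV cover disj [u [Du Uu]] [v [Dv Vv]].
  apply (disj c Dc).
  - exact (polygonal_open_partition D U V HU HV cover disj u c (paths u Du) Uu).
  - apply (polygonal_open_partition D V U HV HU) with v; auto.
    + intros w Dw. destruct (cover w Dw); auto.
    + intros w Dw Vw Uw. exact (disj w Dw Uw Vw).
Qed.

(* Every point reaches the origin by moving vertically away from the x-axis to
   height at least 1, then horizontally to the y-axis, then along it. *)
Lemma connected2_by_vertical_escape (D : pt -> Prop) :
  (forall a b c, D (a, b) -> 0 <= b <= c \/ c <= b <= 0 -> D (a, c)) ->
  (forall a b, 1 <= b \/ b <= -1 -> D (a, b)) ->
  (forall b, D (0, b)) ->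
  connected2 D.
Proof.
  intros vert far axis. apply (connected2_of_polygonal D (0, 0)); [apply axis|].
  intros [x1 x2] Dx.
  assert (Hy : exists y, (1 <= y \/ y <= -1) /\ (0 <= x2 <= y \/ y <= x2 <= 0)).
  { destruct (Rle_dec 0 x2); [exists (x2 + 1) | exists (x2 - 1)]; split; lra. }
  destruct Hy as [y [Hfar Hside]].
  apply rt_trans with (x1, y); [|apply rt_trans with (0, y)]; apply rt_step;
    intros t Ht; unfold seg; simpl.
  - replace (x1 + t * (x1 - x1)) with x1 by ring. apply (vert x1 x2); [exact Dx | nra].
  - replace (y + t * (y - y)) with y by ring. apply far. exact Hfar.
  - replace (0 + t * (0 - 0)) with 0 by ring. apply axis.
Qed.

Lemma pt_neq_fst (u v : pt) : fst u <> fst v -> u <> v.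
Proof. intros H ->. apply H. reflexivity. Qed.

Lemma pt_neq_snd (u v : pt) : snd u <> snd v -> u <> v.
Proof. intros H ->. apply H. reflexivity. Qed.

Definition z0 : pt := (0, 0).
Definition p1 : pt := (1, 0).
Definition p2 : pt := (2, 0).
Definition a_near : pt := (4/5, 0).
Definition a_top : pt := (1, 1/5).

Definition D2 (w : pt) : Prop := w <> p1 /\ w <> p2.
Definition D1 (w : pt) : Prop := 1/5 < dist2 w p1 /\ w <> p2.

Lemma dist2_z0_p1 : dist2 z0 p1 = 1.
Proof. apply dist2_eq; unfold z0, p1; simpl; lra. Qed.

Lemma dist2_z0_p2 : dist2 z0 p2 = 2.
Proof. apply dist2_eq; unfold z0, p2; simpl; lra. Qed.

Lemma dist2_p1_p2 : dist2 p1 p2 = 1.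
Proof. apply dist2_eq; unfold p1, p2; simpl; lra. Qed.

Lemma p1_neq_p2 : p1 <> p2.
Proof. unfold p1, p2. apply pt_neq_fst. simpl. lra. Qed.

Lemma D2_domain : domain2 D2.
Proof.
  split; [|split].
  - exists z0. unfold D2, z0, p1, p2. split; apply pt_neq_fst; simpl; lra.
  - apply open2_and; apply open2_neq.
  - apply connected2_by_vertical_escape; unfold D2, p1, p2.
    + intros a b c [Hb1 Hb2] Hbc.
      split; intros [= -> ->]; [apply Hb1 | apply Hb2]; f_equal; lra.
    + intros a b Hb. split; apply pt_neq_snd; simpl; lra.
    + intros b. split; apply pt_neq_fst; simpl; lra.
Qed.

Lemma boundary_D2 a : boundary2 D2 a <-> a = p1 \/ a = p2.
Proof.
  split.
  - intro Hb. pose proof (boundary2_not_in D2 a (proj1 (proj2 D2_domain)) Hb) as Hna.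
    unfold D2 in Hna. tauto.
  - intro Ha. apply boundary2_of_vertical; [unfold D2; tauto|].
    intros h Hh. unfold D2. destruct Ha as [->| ->]; unfold p1, p2; simpl;
      split; apply pt_neq_snd; simpl; lra.
Qed.

Lemma Qf_D2_ge a b : a = p1 \/ a = p2 -> Rbar_le 1 (Qf z0 a b).
Proof.
  intro Ha. apply Rbar_le_trans with (dist2 z0 a); [|apply Qf_ge_dist].
  simpl. destruct Ha as [->| ->]; [rewrite dist2_z0_p1 | rewrite dist2_z0_p2]; lra.
Qed.

Lemma Qf_p1_p2 : Qf z0 p1 p2 = 1.
Proof.
  rewrite Qf_balanced, dist2_z0_p1; [reflexivity | exact p1_neq_p2 |].
  rewrite dist2_z0_p1. exact dist2_p1_p2.
Qed.

Lemma lam_D2 : lam D2 z0 = 1.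
Proof.
  unfold lam. rewrite Rbar_glb_attained with (L := 1).
  - simpl. now rewrite Rinv_1.
  - intros x [a [b [Ha [_ ->]]]]. apply Qf_D2_ge. unfold D2 in Ha. tauto.
  - exists p1, p2. unfold D2. rewrite Qf_p1_p2. tauto.
Qed.

Lemma lam'_D2 : lam' D2 z0 = 1.
Proof.
  unfold lam'. rewrite Rbar_glb_attained with (L := 1).
  - simpl. now rewrite Rinv_1.
  - intros x [a [b [Ha [_ ->]]]]. apply Qf_D2_ge, boundary_D2, Ha.
  - exists p1, p2. rewrite !boundary_D2, Qf_p1_p2. tauto.
Qed.

Lemma dist_bd_D2 : dist_bd D2 z0 = 1.
Proof.
  unfold dist_bd. apply Rbar_glb_attained.
  - intros x [a [Ha ->]]. simpl.
    destruct (proj1 (boundary_D2 a) Ha) as [->| ->];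
      [rewrite dist2_z0_p1 | rewrite dist2_z0_p2]; lra.
  - exists p1. rewrite boundary_D2, dist2_z0_p1. tauto.
Qed.

Lemma lam''_D2 : lam'' D2 z0 = 1.
Proof.
  unfold lam''. rewrite Rbar_glb_attained with (L := 1).
  - simpl. now rewrite Rinv_1.
  - intros x [a [b [Ha [_ [_ ->]]]]]. apply Qf_D2_ge, boundary_D2, Ha.
  - exists p1, p2. rewrite !boundary_D2, dist_bd_D2, dist2_z0_p1, Qf_p1_p2. tauto.
Qed.

Lemma D1_sub_D2 w : D1 w -> D2 w.
Proof.
  intros [Hw Hw2]. split; [|exact Hw2].
  intros ->. rewrite dist2_refl in Hw. lra.
Qed.

Lemma D1_z0 : D1 z0.
Proof.
  unfold D1. rewrite dist2_z0_p1. unfold z0, p2.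
  split; [lra | apply pt_neq_fst; simpl; lra].
Qed.

Lemma D1_domain : domain2 D1.
Proof.
  split; [|split].
  - exists z0. exact D1_z0.
  - apply open2_and; [apply open2_exterior | apply open2_neq].
  - apply connected2_by_vertical_escape; unfold D1, p2.
    + intros a b c [Hb1 Hb2] Hbc. split.
      * apply Rlt_le_trans with (dist2 (a, b) p1); [exact Hb1|].
        apply Rsqr_incr_0_var; [unfold Rsqr; rewrite !dist2_sqr; simpl; nra |].
        apply dist2_ge0.
      * intros [= -> ->]. apply Hb2. f_equal. lra.
    + intros a b Hb. split.
      * apply dist2_gt; unfold p1; cbn [fst snd]; [lra|]. pose proof (pow2_ge_0 (a - 1)). destruct Hb; nra.
      * apply pt_neq_snd. simpl. lra.
    + intros b. split; [apply dist2_gt; unfold p1; cbn [fst snd]; nra |].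
      apply pt_neq_fst. simpl. lra.
Qed.

Lemma boundary_D1 a : boundary2 D1 a -> dist2 a p1 = 1/5 \/ a = p2.
Proof.
  intro Hb. pose proof (boundary2_not_in D1 a (proj1 (proj2 D1_domain)) Hb) as Hna.
  destruct (classic (a = p2)) as [E|Hne]; [right; exact E | left].
  destruct (Rtotal_order (dist2 a p1) (1/5)) as [Hlt|[E|Hgt]];
    [exfalso | exact E | exfalso; apply Hna; split; assumption].
  destruct (Hb (1/5 - dist2 a p1) ltac:(lra)) as [[w [Hw [Dw _]]] _].
  pose proof (dist2_triangle w a p1). rewrite (dist2_sym w a) in *. lra.
Qed.

Lemma boundary_D1_circle a : dist2 a p1 = 1/5 -> 0 <= snd a -> boundary2 D1 a.
Proof.
  intros Ha Hy. apply boundary2_of_vertical; [unfold D1; lra|].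
  intros h Hh. split.
  - apply dist2_gt; [lra|]. pose proof (dist2_sqr a p1) as Hsq.
    rewrite Ha in Hsq. unfold p1 in *. cbn [fst snd] in *. nra.
  - unfold p2. apply pt_neq_snd. simpl. lra.
Qed.

Lemma boundary_D1_p2 : boundary2 D1 p2.
Proof.
  apply boundary2_of_vertical; [unfold D1; tauto|].
  intros h Hh. unfold D1, p1, p2. simpl. split.
  - apply dist2_gt; simpl; nra.
  - apply pt_neq_snd. simpl. lra.
Qed.

Lemma circle_dist_z0_ge a : dist2 a p1 = 1/5 -> 4/5 <= dist2 z0 a.
Proof. intro Ha. pose proof (dist2_triangle z0 a p1). rewrite dist2_z0_p1 in *. lra. Qed.

Lemma circle_dist_le a b : dist2 a p1 = 1/5 -> dist2 b p1 = 1/5 -> dist2 a b <= 2/5.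
Proof. intros Ha Hb. pose proof (dist2_triangle a p1 b). rewrite (dist2_sym p1 b) in *. lra. Qed.

(* p1 is the midpoint of z0 and p2. *)
Lemma circle_apollonius a :
  dist2 a p1 = 1/5 -> dist2 z0 a * dist2 z0 a + dist2 a p2 * dist2 a p2 = 52/25.
Proof.
  intro Ha. pose proof (dist2_sqr a p1) as Hsq. rewrite Ha in Hsq.
  rewrite !dist2_sqr. unfold z0, p1, p2 in *. simpl in *. nra.
Qed.

Lemma circle_nearest a : dist2 a p1 = 1/5 -> dist2 z0 a = 4/5 -> a = a_near.
Proof.
  intros Ha Hr. pose proof (dist2_sqr a p1) as Hs. pose proof (dist2_sqr z0 a) as Hz.
  rewrite Ha in Hs. rewrite Hr in Hz. destruct a as [x y]. unfold z0, p1, a_near in *.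
  simpl in *. assert (x = 4/5) by nra. assert (y = 0) by nra. subst. reflexivity.
Qed.

Lemma apollonius_bound r s :
  4/5 <= r -> 0 < s -> r * r + s * s = 52/25 ->
  101/100 <= r \/ 101/100 <= r * (2 - r / s).
Proof.
  intros Hr Hs Hsum. destruct (Rle_lt_dec (101/100) r) as [Hle|Hlt]; [left; exact Hle | right].
  assert (Hquartic : r ^ 4 <= (52/25 - r ^ 2) * (2 * r - 101/100) ^ 2).
  { assert (0 <= (r - 4/5) * (101/100 - r)) by nra. nra. }
  assert (Hkey : r * r <= s * (2 * r - 101/100)).
  { apply Rsqr_incr_0_var; [unfold Rsqr | nra]. nra. }
  assert (r / s * s = r) by (field; lra).
  nra.
Qed.

Lemma Qf_D1_ge a b : boundary2 D1 a -> boundary2 D1 b -> Rbar_le (101/100) (Qf z0 a b).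
Proof.
  intros Ha Hb. destruct (boundary_D1 a Ha) as [Ca| ->].
  - pose proof (circle_dist_z0_ge a Ca) as Hr.
    destruct (boundary_D1 b Hb) as [Cb| ->].
    + apply Rbar_le_trans with (2 * dist2 z0 a - dist2 a b); [|apply Qf_ge_sub; lra].
      pose proof (circle_dist_le a b Ca Cb). simpl. lra.
    + assert (Hs : 0 < dist2 a p2).
      { apply dist2_gt0. intros ->. rewrite dist2_sym, dist2_p1_p2 in Ca. lra. }
      destruct (apollonius_bound _ _ Hr Hs (circle_apollonius a Ca)) as [H|H].
      * apply Rbar_le_trans with (dist2 z0 a); [exact H | apply Qf_ge_dist].
      * apply Rbar_le_trans with (dist2 z0 a * (2 - dist2 z0 a / dist2 a p2));
          [exact H | apply Qf_ge_ratio; lra].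
  - apply Rbar_le_trans with (dist2 z0 p2); [|apply Qf_ge_dist].
    rewrite dist2_z0_p2. simpl. lra.
Qed.

Lemma Qf_D1_near_ge b : boundary2 D1 b -> Rbar_le (16/15) (Qf z0 a_near b).
Proof.
  intro Hb.
  assert (Ca : dist2 a_near p1 = 1/5) by (apply dist2_eq; unfold a_near, p1; simpl; lra).
  assert (Hr : dist2 z0 a_near = 4/5) by (apply dist2_eq; unfold z0, a_near; simpl; lra).
  destruct (boundary_D1 b Hb) as [Cb| ->].
  - apply Rbar_le_trans with (2 * dist2 z0 a_near - dist2 a_near b);
      [|apply Qf_ge_sub; lra].
    pose proof (circle_dist_le a_near b Ca Cb). simpl. lra.
  - assert (Hs : dist2 a_near p2 = 6/5) by (apply dist2_eq; unfold a_near, p2; simpl; lra).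
    apply Rbar_le_trans with (dist2 z0 a_near * (2 - dist2 z0 a_near / dist2 a_near p2));
      [|apply Qf_ge_ratio; lra].
    rewrite Hr, Hs. simpl. lra.
Qed.

Lemma dist_bd_D1 : dist_bd D1 z0 = 4/5.
Proof.
  unfold dist_bd. apply Rbar_glb_attained.
  - intros x [a [Ha ->]]. simpl. destruct (boundary_D1 a Ha) as [Ca| ->].
    + exact (circle_dist_z0_ge a Ca).
    + rewrite dist2_z0_p2. lra.
  - exists a_near. split.
    + apply boundary_D1_circle; [apply dist2_eq; unfold a_near, p1; simpl|]; simpl; lra.
    + f_equal. symmetry. apply dist2_eq; unfold z0, a_near; simpl; lra.
Qed.

Lemma Qf_a_top_p2 : Qf z0 a_top p2 = dist2 z0 a_top.
Proof.
  apply Qf_balanced.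
  - unfold a_top, p2. apply pt_neq_fst. simpl. lra.
  - unfold dist2, z0, a_top, p2. simpl. f_equal. ring.
Qed.

Lemma dist2_z0_a_top_lt : dist2 z0 a_top < 16/15.
Proof. apply dist2_lt; unfold z0, a_top; simpl; lra. Qed.

Lemma lam'_D1 : exists g, lam' D1 z0 = Finite (/ g) /\ 1 < g < 16/15.
Proof.
  destruct (Rbar_glb_finite
    (fun q => exists a b, boundary2 D1 a /\ boundary2 D1 b /\ q = Qf z0 a b)
    (101/100) (dist2 z0 a_top)) as [g [Hg Hbounds]].
  - intros x [a [b [Ha [Hb ->]]]]. exact (Qf_D1_ge a b Ha Hb).
  - exists a_top, p2. rewrite Qf_a_top_p2. split; [|split; [exact boundary_D1_p2 | reflexivity]].
    apply boundary_D1_circle; [apply dist2_eq; unfold a_top, p1; simpl|]; simpl; lra.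
  - exists g. unfold lam'. rewrite Hg. pose proof dist2_z0_a_top_lt. split; [reflexivity | lra].
Qed.

Lemma lam''_D1_lt y : 0 < y < 16/15 -> Rbar_lt (lam'' D1 z0) (/ y).
Proof.
  intro Hy. unfold lam''. apply Rbar_inv_lt_inv; [lra|].
  apply Rbar_lt_le_trans with (16/15); [simpl; lra|].
  apply Rbar_glb_ge. intros x [a [b [Ha [Hb [Hd ->]]]]].
  rewrite dist_bd_D1 in Hd. injection Hd as Hd.
  destruct (boundary_D1 a Ha) as [Ca| ->].
  - rewrite (circle_nearest a Ca Hd). exact (Qf_D1_near_ge b Hb).
  - rewrite dist2_z0_p2 in Hd. lra.
Qed.

Theorem lemma5 :
  exists (D1 D2 : pt -> Prop) (z : pt),
    domain2 D1 /\ domain2 D2 /\ (forall w, D1 w -> D2 w) /\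
    (exists p q : pt, p <> q /\ ~ D2 p /\ ~ D2 q) /\
    D1 z /\
    lam D2 z = lam'' D2 z /\ lam'' D2 z = lam' D2 z /\
    Rbar_lt (lam' D1 z) (lam' D2 z) /\ Rbar_lt (lam'' D1 z) (lam' D1 z) /\
    Rbar_lt (lam' D1 z) (lam' D2 z) /\ Rbar_lt (lam'' D1 z) (lam'' D2 z).
Proof.
  destruct lam'_D1 as [g [Hlam' Hg]].
  pose proof (lam''_D1_lt g ltac:(lra)) as lam''_lt_lam'.
  pose proof (lam''_D1_lt 1 ltac:(lra)) as lam''_lt_1. rewrite Rinv_1 in lam''_lt_1.
  assert (lam'_lt_1 : / g < 1) by (rewrite <- Rinv_1; apply Rinv_lt_contravar; lra).
  exists D1, D2, z0.
  refine (conj D1_domain (conj D2_domain (conj D1_sub_D2 (conj _ (conj D1_z0 _))))).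
  - exists p1, p2. unfold D2. split; [exact p1_neq_p2 | tauto].
  - rewrite lam_D2, lam'_D2, lam''_D2, Hlam' in *.
    repeat split; assumption.
Qed.
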